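(* Assume $\sigma_1(x)\equiv\sigma_1(0)\ne0$ is constant, so that $\sigma_2(x)=(q-1)\tau'(0)x^2+(q-1)\tau(0)x+q\sigma_1(0)=\tfrac12\sigma_2''(0)(x-a_2)(x-b_2)$, and assume its zeros are real with $0<a_2\le b_2$ and that $\Lambda_q:=\tau'(0)/\sigma_1(0)<0$. Put $a=b_2$ and $$\rho(x)=|x|^{\alpha}x^{\log_qx-1}\,(qa_2/x,\,qa/x;q)_\infty,\qquad q^{\alpha}=\frac{q^{-1}\tfrac12\sigma_2''(0)}{\sigma_1(0)}.$$ Then there exist polynomials $P_n$, $n\in\mathbb{N}_0$, with $P_n$ of degree $n$ a solution of the q-EHT with $\lambda=\lambda_n$, and nonzero constants $d_n^2$, such that for all $m,n\in\mathbb{N}_0$ $$\int_a^{\infty}P_n(x)P_m(x)\rho(x)\,d_{q^{-1}}x=d_n^2\delta_{mn},$$ i.e. orthogonality with respect to $\rho$ supported on $\{q^{-k}a\}_{k\in\mathbb{N}_0}$.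
   Context: Throughout $0<q<1$. For a function $y$ and $\zeta\in\{q,q^{-1}\}$, $D_\zeta y(x)=\frac{y(x)-y(\zeta x)}{(1-\zeta)x}$ for $x\ne0$ and $D_\zeta y(0)=y'(0)$; $[n]_q=\frac{1-q^n}{1-q}$. Let $\sigma_1$ be a real polynomial of degree at most two, $\tau(x)=\tau'(0)x+\tau(0)$ a real polynomial with $\tau'(0)\ne0$, and $\sigma_2(x):=q[\sigma_1(x)+(1-q^{-1})x\tau(x)]$. The q-EHT with parameter $n$ is $\sigma_1(x)D_{q^{-1}}D_qy(x)+\tau(x)D_qy(x)+\lambda_ny(x)=0$, $\lambda_n=-[n]_q\big(\tau'(0)+\tfrac12[n-1]_{q^{-1}}\sigma_1''(0)\big)$. $(\beta;q)_\infty=\prod_{k\ge0}(1-\beta q^k)$, $(\beta_1,\dots,\beta_r;q)_\infty=\prod_i(\beta_i;q)_\infty$. For $q^\alpha=c$ ($c\ne0$), $\alpha$ is any complex number with $e^{\alpha\ln q}=c$ and $|x|^\alpha:=e^{\alpha\ln|x|}$; for $x>0$, $x^{\log_qx-1}:=\exp\big((\log_qx-1)\ln x\big)$. For $a>0$, $\int_a^\infty f(x)\,d_{q^{-1}}x=(q^{-1}-1)a\sum_{j\ge0}q^{-j}f(q^{-j}a)$. *)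

From Stdlib Require Import Reals Lra.
From Coquelicot Require Import Coquelicot.
Open Scope R_scope.

Definition Dq (zeta : R) (y : R -> R) (x : R) : R :=
  if Req_EM_T x 0 then Derive y 0 else (y x - y (zeta * x)) / ((1 - zeta) * x).

Definition qnum (q : R) (k : Z) : R := (1 - powerRZ q k) / (1 - q).

Definition lambda_n (q : R) (n : nat) (tau1 sigma1pp : R) : R :=
  - qnum q (Z.of_nat n) * (tau1 + / 2 * qnum (/ q) (Z.of_nat n - 1) * sigma1pp).

Definition solves_qEHT (q : R) (sigma1 tau : R -> R) (lam : R) (y : R -> R) : Prop :=
  forall x : R, sigma1 x * Dq (/ q) (Dq q y) x + tau x * Dq q y x + lam * y x = 0.

Definition poly_eval (c : nat -> R) (n : nat) (x : R) : R :=
  sum_f_R0 (fun k => c k * x ^ k) n.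

Fixpoint qprod (beta q : R) (N : nat) : R :=
  match N with
  | O => 1
  | S N' => qprod beta q N' * (1 - beta * q ^ N')
  end.

Definition qpoch_inf (beta q : R) : R := real (Lim_seq (fun N => qprod beta q N)).

(* weight rho(x) = |x|^alpha x^{log_q x - 1} (q a2/x, q a/x; q)_infinity *)
Definition rho (q alpha a2 a : R) (x : R) : R :=
  exp (alpha * ln (Rabs x)) * exp ((ln x / ln q - 1) * ln x)
  * (qpoch_inf (q * a2 / x) q * qpoch_inf (q * a / x) q).

(* terms of the Jackson integral int_a^oo f d_{q^-1}x = (q^-1 - 1) a sum_j q^-j f(q^-j a) *)
Definition jackson_term (q a : R) (f : R -> R) (j : nat) : R :=
  (/ q - 1) * a * ((/ q) ^ j * f ((/ q) ^ j * a)).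

From Stdlib Require Import Reals Lra Lia FunctionalExtensionality Classical.
From Coquelicot Require Import Coquelicot.
Open Scope R_scope.

(* With [sigma1 = s0] constant, the q-EHT operator [L] maps each monomial [x^k] to
   [[k]_q tau'(0) x^k] plus lower-order terms, and the [[k]_q] are distinct, so [L] has a
   monic eigenpolynomial [P_n] of each degree with eigenvalue [[n]_q tau'(0) = -lambda_n].
   On the lattice [x_j = q^-j a] write [L y = A (y(q x) - y x) + B (y(x/q) - y x)]. The
   functional equation of [rho] gives the Pearson relation [w_(j+1) A(x_(j+1)) = w_j B(x_j)]
   for the Jackson weights [w_j], and [A(a) = 0] since [a] is a zero of [sigma2]; so summation
   by parts turns [sum_(j<=J) w_j (L P_n P_m - L P_m P_n)] into a single boundary term, which
   tends to 0 because [w_j] decays like [q^(j^2)]. Hence distinct eigenvalues give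
   orthogonality; the norms are positive since [rho > 0] on the lattice and a nonzero
   polynomial cannot vanish on a whole tail of it. *)

(** * q-integers and polynomials *)

Fixpoint qint (z : R) (m : nat) : R :=
  match m with O => 0 | S m' => qint z m' + z ^ m' end.

Lemma qint_mul_1_minus z m : (1 - z) * qint z m = 1 - z ^ m.
Proof. induction m as [|m IH]; simpl; [ring|]. rewrite Rmult_plus_distr_l, IH. ring. Qed.

Lemma qint_lt z k n : 0 < z -> (k < n)%nat -> qint z k < qint z n.
Proof.
  intros Hz Hkn. induction Hkn; simpl.
  - pose proof (pow_lt z k Hz). lra.
  - pose proof (pow_lt z m Hz). lra.
Qed.

Lemma pow_unit_interval q N : 0 <= q <= 1 -> 0 <= q ^ N <= 1.
Proof.
  intros Hq. split; [now apply pow_le|].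
  rewrite <- (pow1 N). apply pow_incr. lra.
Qed.

Lemma qint_bounds q N : 0 < q < 1 -> 0 <= qint q N <= / (1 - q).
Proof.
  intros Hq. pose proof (pow_unit_interval q N ltac:(lra)).
  replace (qint q N) with ((1 - q ^ N) / (1 - q))
    by (rewrite <- qint_mul_1_minus; field; lra).
  split; unfold Rdiv.
  - apply Rmult_le_pos; [lra|]. left; apply Rinv_0_lt_compat; lra.
  - rewrite <- (Rmult_1_l (/ (1 - q))) at 2.
    apply Rmult_le_compat_r; [left; apply Rinv_0_lt_compat|]; lra.
Qed.

Lemma lambda_n_qint q n t1 : q <> 1 -> lambda_n q n t1 0 = - qint q n * t1.
Proof.
  intros Hq. unfold lambda_n, qnum. rewrite <- pow_powerRZ, <- qint_mul_1_minus.
  rewrite Rmult_0_r, Rplus_0_r. field. intro; apply Hq; lra.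
Qed.

Lemma poly_eval_S c N x : poly_eval c (S N) x = poly_eval c N x + c (S N) * x ^ S N.
Proof. reflexivity. Qed.

Lemma poly_eval_at_0 c N : poly_eval c N 0 = c 0%nat.
Proof.
  induction N as [|N IH]; [unfold poly_eval; simpl; ring|].
  rewrite poly_eval_S, IH. simpl. ring.
Qed.

Lemma poly_eval_S_top_0 c N : c (S N) = 0 -> poly_eval c (S N) = poly_eval c N.
Proof. intros H. apply functional_extensionality; intro x. rewrite poly_eval_S, H. ring. Qed.

Lemma poly_eval_add u v N x :
  poly_eval (fun k => u k + v k) N x = poly_eval u N x + poly_eval v N x.
Proof. unfold poly_eval. rewrite <- plus_sum. apply sum_eq. intros; ring. Qed.

Lemma poly_eval_scal a c N x : poly_eval (fun k => a * c k) N x = a * poly_eval c N x.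
Proof. unfold poly_eval. rewrite scal_sum. apply sum_eq. intros; ring. Qed.

Lemma poly_eval_dilate c N a x : poly_eval c N (a * x) = poly_eval (fun k => c k * a ^ k) N x.
Proof. unfold poly_eval. apply sum_eq. intros. rewrite Rpow_mult_distr. ring. Qed.

Definition poly_mulX (c : nat -> R) (k : nat) : R :=
  match k with O => 0 | S k' => c k' end.

Lemma poly_eval_mulX c N x : x * poly_eval c N x = poly_eval (poly_mulX c) (S N) x.
Proof.
  induction N as [|N IH]; [unfold poly_eval; simpl; ring|].
  rewrite (poly_eval_S (poly_mulX c)), poly_eval_S, <- IH. simpl. ring.
Qed.

(* Coefficients of [D_z p] for [p] of coefficients [c], since [D_z x^(k+1) = [k+1]_z x^k]. *)
Definition qdiff_coef (z : R) (c : nat -> R) (k : nat) : R := c (S k) * qint z (S k).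

Lemma poly_eval_sub_dilate z c N x :
  poly_eval c (S N) x - poly_eval c (S N) (z * x) = (1 - z) * x * poly_eval (qdiff_coef z c) N x.
Proof.
  induction N as [|N IH].
  - unfold poly_eval, qdiff_coef; simpl. ring.
  - rewrite (poly_eval_S c (S N)), (poly_eval_S c (S N) (z * x)), (poly_eval_S (qdiff_coef z c)).
    rewrite Rpow_mult_distr.
    replace (poly_eval c (S N) x + c (S (S N)) * x ^ S (S N) -
       (poly_eval c (S N) (z * x) + c (S (S N)) * (z ^ S (S N) * x ^ S (S N))))
      with ((poly_eval c (S N) x - poly_eval c (S N) (z * x)) +
            c (S (S N)) * ((1 - z ^ S (S N)) * x ^ S (S N))) by ring.
    rewrite IH, <- qint_mul_1_minus. unfold qdiff_coef. simpl. ring.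
Qed.

Lemma is_derive_poly_eval_0 c N : is_derive (poly_eval c (S N)) 0 (c 1%nat).
Proof.
  induction N as [|N IH].
  - unfold poly_eval; simpl. auto_derive; auto. ring.
  - replace (c 1%nat) with (c 1%nat + c (S (S N)) * (INR (S (S N)) * 0 ^ S N)) by (simpl; ring).
    apply (is_derive_plus (poly_eval c (S N)) (fun x => c (S (S N)) * x ^ S (S N))); [exact IH|].
    auto_derive; [auto | simpl; ring].
Qed.

Lemma Dq_poly_eval z c N x : z <> 1 ->
  Dq z (poly_eval c (S N)) x = poly_eval (qdiff_coef z c) N x.
Proof.
  intros Hz. unfold Dq. destruct (Req_EM_T x 0) as [->|Hx].
  - rewrite (is_derive_unique _ _ _ (is_derive_poly_eval_0 c N)), poly_eval_at_0.
    unfold qdiff_coef. simpl. ring.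
  - rewrite poly_eval_sub_dilate. field. split; [exact Hx|]. intro; apply Hz; lra.
Qed.

(** * Eigenpolynomials *)

Definition qEHT_op (q s0 t0 t1 : R) (y : R -> R) (x : R) : R :=
  s0 * Dq (/ q) (Dq q y) x + (t1 * x + t0) * Dq q y x.

Section Eigenpolynomials.

Variables q s0 t0 t1 : R.
Hypothesis Hq : 0 < q < 1.
Hypothesis Ht1 : t1 <> 0.

Definition qEHT_coef (c : nat -> R) (k : nat) : R :=
  s0 * qdiff_coef (/ q) (qdiff_coef q c) k + t1 * poly_mulX (qdiff_coef q c) k
  + t0 * qdiff_coef q c k.

Lemma qEHT_op_poly_eval c n x : (forall k, (n < k)%nat -> c k = 0) ->
  qEHT_op q s0 t0 t1 (poly_eval c n) x = poly_eval (qEHT_coef c) n x.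
Proof.
  intros Hc.
  assert (Hqinv : / q <> 1).
  { assert (1 < / q) by (rewrite <- Rinv_1; apply Rinv_lt_contravar; lra). lra. }
  assert (Hdc : forall k, (n <= k)%nat -> qdiff_coef q c k = 0)
    by (intros; unfold qdiff_coef; rewrite Hc by lia; ring).
  assert (Dc : Dq q (poly_eval c n) = poly_eval (qdiff_coef q c) n).
  { rewrite <- (poly_eval_S_top_0 c n) by (apply Hc; lia).
    apply functional_extensionality; intro; apply Dq_poly_eval; lra. }
  assert (DDc : Dq (/ q) (poly_eval (qdiff_coef q c) n)
                = poly_eval (qdiff_coef (/ q) (qdiff_coef q c)) n).
  { rewrite <- (poly_eval_S_top_0 (qdiff_coef q c) n) by (apply Hdc; lia).
    apply functional_extensionality; intro; now apply Dq_poly_eval. }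
  unfold qEHT_op, qEHT_coef. rewrite Dc, DDc, !poly_eval_add, !poly_eval_scal.
  rewrite <- (poly_eval_S_top_0 (poly_mulX (qdiff_coef q c)) n) by (apply Hdc; lia).
  rewrite <- poly_eval_mulX. ring.
Qed.

(* Solve [qEHT_coef c k = [n]_q t1 c k] for [c k] downwards from [c n = 1], [c (n+1) = 0];
   the divisor [[k]_q - [n]_q] is nonzero for [k < n]. *)
Fixpoint eig_coef_pair (n m : nat) : R * R :=
  match m with
  | O => (1, 0)
  | S m' =>
      let (u, v) := eig_coef_pair n m' in
      let k := (n - S m')%nat in
      (- (s0 * qint q (S (S k)) * qint (/ q) (S k) * v + t0 * qint q (S k) * u)
         / (t1 * (qint q k - qint q n)), u)
  end.

Definition eig_coef (n k : nat) : R :=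
  if (k <=? n)%nat then fst (eig_coef_pair n (n - k)) else 0.

Lemma eig_coef_above n k : (n < k)%nat -> eig_coef n k = 0.
Proof. intros H. unfold eig_coef. destruct (Nat.leb_spec k n); [lia|reflexivity]. Qed.

Lemma eig_coef_top n : eig_coef n n = 1.
Proof. unfold eig_coef. rewrite Nat.leb_refl, Nat.sub_diag. reflexivity. Qed.

Lemma eig_coef_pair_eq n m : (m <= n)%nat ->
  eig_coef_pair n m = (eig_coef n (n - m), eig_coef n (S (n - m))).
Proof.
  intros Hm. apply injective_projections; simpl.
  - unfold eig_coef. destruct (Nat.leb_spec (n - m) n); [|lia].
    now replace (n - (n - m))%nat with m by lia.
  - destruct m as [|m]; [now rewrite eig_coef_above by lia|].
    simpl. destruct (eig_coef_pair n m) as [u v] eqn:E. simpl.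
    unfold eig_coef. destruct (Nat.leb_spec (S (n - S m)) n); [|lia].
    now replace (n - S (n - S m))%nat with m by lia; rewrite E.
Qed.

Lemma eig_coef_step n k : (k < n)%nat ->
  eig_coef n k =
  - (s0 * qint q (S (S k)) * qint (/ q) (S k) * eig_coef n (S (S k))
     + t0 * qint q (S k) * eig_coef n (S k)) / (t1 * (qint q k - qint q n)).
Proof.
  intros Hk. unfold eig_coef at 1. destruct (Nat.leb_spec k n); [|lia].
  replace (n - k)%nat with (S (n - S k)) by lia.
  cbn [eig_coef_pair]. rewrite eig_coef_pair_eq by lia. cbn [fst].
  replace (n - S (n - S k))%nat with k by lia.
  now replace (n - (n - S k))%nat with (S k) by lia.
Qed.

Lemma eig_coef_recurrence n k :
  s0 * (eig_coef n (S (S k)) * qint q (S (S k)) * qint (/ q) (S k))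
  + t0 * (eig_coef n (S k) * qint q (S k))
  + t1 * (qint q k - qint q n) * eig_coef n k = 0.
Proof.
  destruct (Nat.lt_ge_cases k n) as [Hk|Hk].
  - pose proof (qint_lt q k n ltac:(lra) Hk).
    rewrite (eig_coef_step n k Hk). field. split; [lra|exact Ht1].
  - rewrite !(eig_coef_above n (S _)) by lia.
    destruct (Nat.eq_dec k n) as [->|Hne]; [ring|].
    rewrite eig_coef_above by lia. ring.
Qed.

Lemma eig_poly_eigen n x :
  qEHT_op q s0 t0 t1 (poly_eval (eig_coef n) n) x = qint q n * t1 * poly_eval (eig_coef n) n x.
Proof.
  rewrite qEHT_op_poly_eval by apply eig_coef_above.
  rewrite <- poly_eval_scal. apply f_equal3; [|reflexivity|reflexivity].
  apply functional_extensionality; intro k.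
  pose proof (eig_coef_recurrence n k).
  unfold qEHT_coef, qdiff_coef. destruct k; simpl poly_mulX; simpl qint in *; lra.
Qed.

Lemma eig_poly_solves_qEHT n :
  solves_qEHT q (fun _ => s0) (fun x => t1 * x + t0) (lambda_n q n t1 0)
    (poly_eval (eig_coef n) n).
Proof.
  intro x. rewrite lambda_n_qint by lra.
  pose proof (eig_poly_eigen n x) as E. unfold qEHT_op in E. lra.
Qed.

End Eigenpolynomials.

(** * The weight *)

Lemma qprod_S_shift b q N : qprod b q (S N) = (1 - b) * qprod (b * q) q N.
Proof.
  induction N as [|N IH]; [simpl; ring|].
  change (qprod b q (S (S N))) with (qprod b q (S N) * (1 - b * q ^ S N)).
  rewrite IH. simpl. ring.
Qed.

Lemma real_Rbar_mult (a : R) (l : Rbar) : real (Rbar_mult a l) = a * real l.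
Proof.
  destruct l as [r| |]; simpl; [ring| |];
  unfold Rbar_mult, Rbar_mult'; repeat destruct Rle_dec; repeat destruct Rle_lt_or_eq_dec;
  simpl; ring.
Qed.

Lemma qpoch_inf_shift b q : qpoch_inf b q = (1 - b) * qpoch_inf (b * q) q.
Proof.
  unfold qpoch_inf. rewrite <- Lim_seq_incr_1.
  rewrite (Lim_seq_ext _ (fun N => (1 - b) * qprod (b * q) q N)) by (intro; apply qprod_S_shift).
  rewrite Lim_seq_scal_l. apply real_Rbar_mult.
Qed.

Lemma exp_le_exp x y : x <= y -> exp x <= exp y.
Proof. intros [H|H]; [left; now apply exp_increasing | subst; lra]. Qed.

(* [1 + u/(1-u) <= exp (u/(1-u))] with [1 + u/(1-u) = 1/(1-u)]. *)
Lemma exp_le_1_minus u : 0 <= u < 1 -> exp (- (u / (1 - u))) <= 1 - u.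
Proof.
  intros Hu. pose proof (exp_ineq1_le (u / (1 - u))) as H.
  replace (1 + u / (1 - u)) with (/ (1 - u)) in H by (field; lra).
  rewrite exp_Ropp. rewrite <- (Rinv_inv (1 - u)) at 2.
  apply Rinv_le_contravar; [apply Rinv_0_lt_compat; lra | exact H].
Qed.

Lemma qprod_bounds b q N : 0 < q < 1 -> 0 <= b < 1 ->
  exp (- (b / (1 - b)) * qint q N) <= qprod b q N <= 1.
Proof.
  intros Hq Hb. induction N as [|N IH]; [simpl; rewrite Rmult_0_r, exp_0; lra|].
  change (qprod b q (S N)) with (qprod b q N * (1 - b * q ^ N)). simpl qint.
  pose proof (pow_unit_interval q N ltac:(lra)).
  assert (Hu : 0 <= b * q ^ N <= b) by nra.
  assert (Hfactor : exp (- (b / (1 - b)) * q ^ N) <= 1 - b * q ^ N).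
  { eapply Rle_trans; [|apply exp_le_1_minus; lra].
    apply exp_le_exp. rewrite Ropp_mult_distr_l_reverse. apply Ropp_le_contravar.
    replace (b / (1 - b) * q ^ N) with (b * q ^ N * / (1 - b)) by (field; lra).
    apply Rmult_le_compat_l; [lra|]. apply Rinv_le_contravar; lra. }
  rewrite Rmult_plus_distr_l, exp_plus.
  pose proof (exp_pos (- (b / (1 - b)) * qint q N)).
  pose proof (exp_pos (- (b / (1 - b)) * q ^ N)).
  split; [apply Rmult_le_compat|]; nra.
Qed.

Lemma qpoch_inf_pos b q : 0 < q < 1 -> 0 <= b < 1 -> 0 < qpoch_inf b q.
Proof.
  intros Hq Hb.
  set (m := exp (- (b / (1 - b)) * / (1 - q))).
  assert (Hlow : forall N, m <= qprod b q N).
  { intro N. eapply Rle_trans; [|apply qprod_bounds; auto].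
    apply exp_le_exp. pose proof (qint_bounds q N Hq).
    assert (0 <= b / (1 - b)) by (apply Rmult_le_pos; [lra| left; apply Rinv_0_lt_compat; lra]).
    nra. }
  assert (L1 := Lim_seq_le_loc (fun _ => m) (qprod b q) (filter_forall _ Hlow)).
  assert (L2 := Lim_seq_le_loc (qprod b q) (fun _ => 1)
     (filter_forall _ (fun N => proj2 (qprod_bounds b q N Hq Hb)))).
  rewrite Lim_seq_const in L1, L2. assert (0 < m) by apply exp_pos.
  unfold qpoch_inf. destruct (Lim_seq (qprod b q)); simpl in *; try contradiction; lra.
Qed.

Lemma rho_pos q alpha a2 b2 x : 0 < q < 1 -> 0 < a2 -> a2 <= b2 -> b2 <= x ->
  0 < rho q alpha a2 b2 x.
Proof.
  intros Hq Ha Hab Hx.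
  assert (Hratio : forall c, 0 < c <= b2 -> 0 <= q * c / x < 1).
  { intros c Hc. split.
    - apply Rmult_le_pos; [nra| left; apply Rinv_0_lt_compat; lra].
    - apply (Rmult_lt_reg_r x); [lra|]. unfold Rdiv. rewrite Rmult_assoc, Rinv_l by lra. nra. }
  unfold rho. pose proof (exp_pos (alpha * ln (Rabs x))).
  pose proof (exp_pos ((ln x / ln q - 1) * ln x)).
  pose proof (qpoch_inf_pos _ q Hq (Hratio a2 ltac:(lra))).
  pose proof (qpoch_inf_pos _ q Hq (Hratio b2 ltac:(lra))).
  repeat apply Rmult_lt_0_compat; assumption.
Qed.

Lemma rho_dilate q alpha a2 b2 x : 0 < q < 1 -> 0 < x ->
  exp (alpha * ln q) = / (a2 * b2) ->
  rho q alpha a2 b2 (/ q * x) * ((x - q * a2) * (x - q * b2))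
  = rho q alpha a2 b2 x * (a2 * b2 * q ^ 2).
Proof.
  intros Hq Hx Hal.
  assert (Hlnq : ln q < 0) by (rewrite <- ln_1; apply ln_increasing; lra).
  assert (Hab : a2 * b2 <> 0).
  { intro E. rewrite E, Rinv_0 in Hal. pose proof (exp_pos (alpha * ln q)). lra. }
  assert (Hiq : 0 < / q) by (apply Rinv_0_lt_compat; lra).
  assert (Hxq : 0 < / q * x) by (apply Rmult_lt_0_compat; lra).
  assert (Hln : ln (/ q * x) = ln x - ln q) by (rewrite ln_mult, ln_Rinv by lra; ring).
  assert (Hpow : exp (alpha * (ln x - ln q)) = exp (alpha * ln x) * (a2 * b2)).
  { replace (alpha * (ln x - ln q)) with (alpha * ln x + - (alpha * ln q)) by ring.
    rewrite exp_plus, exp_Ropp, Hal, Rinv_inv. reflexivity. }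
  assert (Hgauss : exp (((ln x - ln q) / ln q - 1) * (ln x - ln q))
               = exp ((ln x / ln q - 1) * ln x) * (q * q / (x * x))).
  { replace (((ln x - ln q) / ln q - 1) * (ln x - ln q)) with
      ((ln x / ln q - 1) * ln x + ((ln q + ln q) + - (ln x + ln x))) by (field; lra).
    rewrite !exp_plus, exp_Ropp, !exp_plus, !exp_ln by lra. field. lra. }
  assert (Harg : forall c, q * c / (/ q * x) = q * c / x * q) by (intro; field; lra).
  unfold rho. rewrite !Rabs_right, Hln, Hpow, Hgauss, !Harg by lra.
  rewrite (qpoch_inf_shift (q * a2 / x)), (qpoch_inf_shift (q * b2 / x)).
  field. lra.
Qed.

Definition lattice (q b : R) (j : nat) : R := (/ q) ^ j * b.

Lemma lattice_S q b j : lattice q b (S j) = / q * lattice q b j.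
Proof. unfold lattice; simpl; ring. Qed.

Lemma lattice_ge q b j : 0 < q < 1 -> 0 < b -> b <= lattice q b j.
Proof.
  intros Hq Hb. unfold lattice.
  assert (1 <= / q) by (rewrite <- Rinv_1; apply Rinv_le_contravar; lra).
  pose proof (pow_R1_Rle (/ q) j H). nra.
Qed.

Lemma lattice_mul_pow q b j : 0 < q -> lattice q b j * q ^ j = b.
Proof.
  intros Hq. unfold lattice. rewrite Rmult_comm, <- Rmult_assoc, <- Rpow_mult_distr.
  rewrite Rinv_r, pow1 by lra. ring.
Qed.

Lemma poly_eval_lattice_not_vanishing q b c N k : 0 < q < 1 -> 0 < b -> c N <> 0 ->
  ~ (forall j, (k <= j)%nat -> poly_eval c N (lattice q b j) = 0).
Proof.
  intros Hq Hb. revert c k. induction N as [|N IH]; intros c k Hc Hvan.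
  - specialize (Hvan k (le_n k)). unfold poly_eval in Hvan. simpl in Hvan. lra.
  - apply (IH (qdiff_coef q c) (S k)).
    + pose proof (qint_lt q 0 (S N) ltac:(lra) ltac:(lia)).
      unfold qdiff_coef. apply Rmult_integral_contrapositive. simpl qint in *. split; [exact Hc|lra].
    + intros j Hj. destruct j as [|j]; [lia|].
      pose proof (lattice_ge q b (S j) Hq Hb).
      rewrite <- (Dq_poly_eval q c N) by lra. unfold Dq.
      destruct (Req_EM_T (lattice q b (S j)) 0); [lra|].
      replace (q * lattice q b (S j)) with (lattice q b j) by (rewrite lattice_S; field; lra).
      rewrite (Hvan (S j)), (Hvan j) by lia. unfold Rdiv. ring.
Qed.

(* [ex_series_ext] states its hypothesis in the carrier of a normed module, where [ring] does not
   recognise the equation. *)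
Lemma ex_series_ext_R (a b : nat -> R) : (forall n, a n = b n) -> ex_series a -> ex_series b.
Proof. exact (ex_series_ext a b). Qed.

Lemma Series_pos_of_term (a : nat -> R) j0 :
  (forall j, 0 <= a j) -> 0 < a j0 -> ex_series a -> 0 < Series a.
Proof.
  intros Hnonneg Hj0 Hex.
  assert (Hsum : sum_f_R0 a j0 <= Series a).
  { apply sum_incr; [|exact Hnonneg]. apply is_series_Reals, Series_correct, Hex. }
  destruct j0 as [|j0]; simpl in Hsum; [lra|].
  pose proof (cond_pos_sum a j0 Hnonneg). lra.
Qed.

Section Weight.

Variables q alpha a2 b2 : R.
Hypothesis Hq : 0 < q < 1.
Hypothesis Ha2 : 0 < a2.
Hypothesis Hab : a2 <= b2.
Hypothesis Halpha : exp (alpha * ln q) = / (a2 * b2).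

Definition weight (j : nat) : R := jackson_term q b2 (rho q alpha a2 b2) j.

Local Notation x := (lattice q b2).

Lemma jackson_term_mul_rho (f : R -> R) j :
  jackson_term q b2 (fun z => f z * rho q alpha a2 b2 z) j = weight j * f (x j).
Proof. unfold weight, jackson_term, lattice. ring. Qed.

Lemma weight_eq j : weight j = (/ q - 1) * b2 * ((/ q) ^ j * rho q alpha a2 b2 (x j)).
Proof. reflexivity. Qed.

Lemma weight_pos j : 0 < weight j.
Proof.
  rewrite weight_eq.
  assert (1 < / q) by (rewrite <- Rinv_1; apply Rinv_lt_contravar; lra).
  pose proof (pow_lt (/ q) j ltac:(lra)).
  pose proof (rho_pos q alpha a2 b2 (x j) Hq Ha2 Hab (lattice_ge q b2 j Hq ltac:(lra))).
  apply Rmult_lt_0_compat; apply Rmult_lt_0_compat; lra.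
Qed.

Lemma weight_step j : weight (S j) * ((x j - q * a2) * (x j - q * b2)) = weight j * (q * a2 * b2).
Proof.
  rewrite !weight_eq, lattice_S.
  pose proof (lattice_ge q b2 j Hq ltac:(lra)).
  transitivity ((/ q - 1) * b2 * ((/ q) ^ S j *
    (rho q alpha a2 b2 (/ q * x j) * ((x j - q * a2) * (x j - q * b2))))); [ring|].
  rewrite rho_dilate by (auto; lra). simpl. field. lra.
Qed.

(* The weight decays like [q^(j^2)]: the step factor [q a2 b2 / ((x_j - q a2)(x_j - q b2))]
   is [O(q^(2j))] because [x_j = b2 q^-j]. *)
Lemma weight_S_le j : weight (S j) <= weight j * (q * a2 / ((1 - q) ^ 2 * b2) * (q ^ 2) ^ j).
Proof.
  pose proof (weight_step j) as Hstep. pose proof (weight_pos j). pose proof (weight_pos (S j)).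
  pose proof (lattice_ge q b2 j Hq ltac:(lra)) as Hx.
  pose proof (pow_lt q j ltac:(lra)).
  assert (HD : ((1 - q) * x j) ^ 2 <= (x j - q * a2) * (x j - q * b2)).
  { assert ((1 - q) * x j <= x j - q * b2) by nra.
    assert ((1 - q) * x j <= x j - q * a2) by nra.
    simpl. rewrite Rmult_1_r. apply Rmult_le_compat; nra. }
  assert (HxD : 0 < ((1 - q) * x j) ^ 2) by (apply pow_lt; nra).
  apply (Rmult_le_reg_r (((1 - q) * x j) ^ 2)); [exact HxD|].
  apply Rle_trans with (weight (S j) * ((x j - q * a2) * (x j - q * b2))).
  { apply Rmult_le_compat_l; lra. }
  rewrite Hstep. pose proof (lattice_mul_pow q b2 j ltac:(lra)) as Hb.
  set (X := x j) in *. rewrite <- Hb.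
  rewrite <- pow_mult, Nat.mul_comm, pow_mult. right. field. repeat split; nra.
Qed.

Lemma ex_series_weight_pow k : ex_series (fun j => weight j * x j ^ k).
Proof.
  set (a := fun j => weight j * x j ^ k).
  assert (Hpos : forall j, 0 < a j).
  { intro j. apply Rmult_lt_0_compat; [apply weight_pos|].
    apply pow_lt. pose proof (lattice_ge q b2 j Hq ltac:(lra)). lra. }
  set (C := q * a2 / ((1 - q) ^ 2 * b2) * (/ q) ^ k).
  apply ex_series_Rabs, (ex_series_DAlembert a 0); [lra | intro j; specialize (Hpos j); lra |].
  apply (is_lim_seq_le_le (fun _ => 0) _ (fun j => C * (q ^ 2) ^ j)).
  - intro j. pose proof (Hpos j). pose proof (Hpos (S j)).
    rewrite Rabs_right by (left; apply Rdiv_lt_0_compat; auto).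
    split; [left; apply Rdiv_lt_0_compat; auto|].
    apply Rle_div_l; [exact H|].
    unfold a, C. rewrite lattice_S, Rpow_mult_distr. pose proof (weight_S_le j).
    pose proof (pow_lt (/ q) k ltac:(apply Rinv_0_lt_compat; lra)).
    pose proof (pow_lt (x j) k ltac:(pose proof (lattice_ge q b2 j Hq ltac:(lra)); lra)).
    apply Rle_trans with
      (weight j * (q * a2 / ((1 - q) ^ 2 * b2) * (q ^ 2) ^ j) * ((/ q) ^ k * x j ^ k)).
    + apply Rmult_le_compat_r; [nra|lra].
    + right; ring.
  - apply is_lim_seq_const.
  - replace (Finite 0) with (Rbar_mult C 0) by (simpl; f_equal; ring).
    apply is_lim_seq_scal_l, is_lim_seq_geom. rewrite Rabs_right; nra.
Qed.

Lemma ex_series_weight_pow_poly c N k :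
  ex_series (fun j => weight j * (x j ^ k * poly_eval c N (x j))).
Proof.
  revert k. induction N as [|N IH]; intro k.
  - apply (ex_series_ext_R (fun j => c 0%nat * (weight j * x j ^ k))).
    + intro j. unfold poly_eval. simpl. ring.
    + exact (ex_series_scal (c 0%nat) _ (ex_series_weight_pow k)).
  - apply (ex_series_ext_R (fun j => weight j * (x j ^ k * poly_eval c N (x j))
        + c (S N) * (weight j * x j ^ (k + S N)))).
    + intro j. rewrite poly_eval_S, pow_add. ring.
    + exact (ex_series_plus _ _ (IH k) (ex_series_scal (c (S N)) _ (ex_series_weight_pow _))).
Qed.

Lemma ex_series_weight_poly_mul c N d M :
  ex_series (fun j => weight j * (poly_eval c N (x j) * poly_eval d M (x j))).
Proof.
  induction N as [|N IH].
  - apply (ex_series_ext_R (fun j => c 0%nat * (weight j * (x j ^ 0 * poly_eval d M (x j))))).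
    + intro j. unfold poly_eval at 2. simpl. ring.
    + exact (ex_series_scal (c 0%nat) _ (ex_series_weight_pow_poly d M 0)).
  - apply (ex_series_ext_R (fun j => weight j * (poly_eval c N (x j) * poly_eval d M (x j))
        + c (S N) * (weight j * (x j ^ S N * poly_eval d M (x j))))).
    + intro j. rewrite poly_eval_S. ring.
    + exact (ex_series_plus _ _ IH (ex_series_scal (c (S N)) _ (ex_series_weight_pow_poly _ _ _))).
Qed.

Lemma weight_norm_pos c N : c N <> 0 ->
  0 < Series (fun j => weight j * (poly_eval c N (x j) * poly_eval c N (x j))).
Proof.
  intros HcN.
  assert (Hj0 : exists j0, poly_eval c N (x j0) <> 0).
  { apply NNPP. intro Hnone.
    apply (poly_eval_lattice_not_vanishing q b2 c N 0 Hq ltac:(lra) HcN).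
    intros j _. apply NNPP. intro Hj. apply Hnone. now exists j. }
  destruct Hj0 as [j0 Hj0].
  apply (Series_pos_of_term _ j0).
  - intro j. pose proof (weight_pos j). apply Rmult_le_pos; [lra | apply Rle_0_sqr].
  - apply Rmult_lt_0_compat; [apply weight_pos | now apply Rsqr_pos_lt].
  - apply ex_series_weight_poly_mul.
Qed.

(* Boundary term of the summation by parts: [P (x_(J+1)) = P' (x_J)] for the rescaled [P'],
   and [weight J / x_J^2 = weight J q^(2J) / b2^2] with summable [weight J P' Q]. *)
Lemma weight_boundary_lim c N d M :
  is_lim_seq (fun J => weight J / x J ^ 2 *
     (poly_eval c N (x (S J)) * poly_eval d M (x J)
      - poly_eval d M (x (S J)) * poly_eval c N (x J))) 0.
Proof.
  set (c' := fun k => c k * (/ q) ^ k). set (d' := fun k => d k * (/ q) ^ k).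
  apply (is_lim_seq_ext (fun J => / b2 ^ 2 * ((q ^ 2) ^ J *
     (weight J * (poly_eval c' N (x J) * poly_eval d M (x J))
      - weight J * (poly_eval d' M (x J) * poly_eval c N (x J)))))).
  - intro J. rewrite !lattice_S, !poly_eval_dilate. fold c' d'.
    pose proof (lattice_ge q b2 J Hq ltac:(lra)).
    rewrite <- (lattice_mul_pow q b2 J) at 1 by lra.
    rewrite <- pow_mult, Nat.mul_comm, pow_mult. field.
    split; [lra | apply pow_nonzero; lra].
  - replace (Finite 0) with (Rbar_mult (/ b2 ^ 2) (0 * (0 - 0))) by (simpl; f_equal; ring).
    apply is_lim_seq_scal_l, is_lim_seq_mult'.
    + apply is_lim_seq_geom. rewrite Rabs_right; nra.
    + apply is_lim_seq_minus'; apply ex_series_lim_0, ex_series_weight_poly_mul.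
Qed.

End Weight.

(** * Orthogonality *)

Section Green.

Variables q s0 t0 t1 alpha a2 b2 : R.
Hypothesis Hq : 0 < q < 1.
Hypothesis Ha2 : 0 < a2.
Hypothesis Hab : a2 <= b2.
Hypothesis Hsigma2 :
  forall x, q * (s0 + (1 - / q) * x * (t1 * x + t0)) = (q - 1) * t1 * (x - a2) * (x - b2).
Hypothesis Halpha : exp (alpha * ln q) = / (a2 * b2).

Local Notation x := (lattice q b2).
Local Notation w := (weight q alpha a2 b2).
Local Notation L := (qEHT_op q s0 t0 t1).

Definition coefA (z : R) : R := q * (s0 + (1 - / q) * z * (t1 * z + t0)) / ((1 - q) ^ 2 * z ^ 2).
Definition coefB (z : R) : R := q ^ 2 * s0 / ((1 - q) ^ 2 * z ^ 2).

Lemma qEHT_op_difference_form y z : z <> 0 ->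
  L y z = coefA z * (y (q * z) - y z) + coefB z * (y (/ q * z) - y z).
Proof.
  intros Hz. unfold qEHT_op, coefA, coefB, Dq.
  assert (Hzq : / q * z <> 0) by (apply Rmult_integral_contrapositive;
    split; [apply Rinv_neq_0_compat|]; lra).
  destruct (Req_EM_T z 0) as [|_]; [contradiction|].
  destruct (Req_EM_T (/ q * z) 0) as [|_]; [contradiction|].
  replace (q * (/ q * z)) with z by (field; lra).
  field. repeat split; lra.
Qed.

(* Pearson equation: [coefA (x_(j+1)) = (q-1) t1 (x_j - q a2)(x_j - q b2) / ((1-q)^2 x_j^2)]
   by the factorisation of [sigma2], and [weight_step] absorbs the quadratic factor. *)
Lemma weight_pearson j : w (S j) * coefA (x (S j)) = w j * coefB (x j).
Proof.
  pose proof (weight_step q alpha a2 b2 Hq Ha2 Hab Halpha j) as Hstep.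
  pose proof (lattice_ge q b2 j Hq ltac:(lra)) as Hx.
  assert (Hs0 : q * s0 = (q - 1) * t1 * a2 * b2).
  { specialize (Hsigma2 0). rewrite Rmult_0_r, Rmult_0_l, Rplus_0_r in Hsigma2. lra. }
  unfold coefA, coefB. rewrite Hsigma2, lattice_S.
  set (X := x j) in *.
  transitivity (w (S j) * ((X - q * a2) * (X - q * b2)) * ((q - 1) * t1)
                / ((1 - q) ^ 2 * X ^ 2)); [field; split; lra|].
  rewrite Hstep. replace (q ^ 2 * s0) with (q * (q * s0)) by ring. rewrite Hs0.
  field. split; lra.
Qed.

Lemma coefA_lattice_0 : coefA (x 0) = 0.
Proof. unfold coefA. rewrite Hsigma2. unfold lattice. simpl. unfold Rdiv. ring. Qed.

(* Summation by parts: the [coefA] part of step [j+1] cancels the [coefB] part of step [j]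
   by [weight_pearson], and at [j = 0] it vanishes by [coefA_lattice_0]. *)
Lemma green_identity (y z : R -> R) J :
  sum_f_R0 (fun j => w j * (L y (x j) * z (x j) - L z (x j) * y (x j))) J
  = w J * coefB (x J) * (y (x (S J)) * z (x J) - z (x (S J)) * y (x J)).
Proof.
  assert (Hx : forall j, x j <> 0)
    by (intro j; pose proof (lattice_ge q b2 j Hq ltac:(lra)); lra).
  assert (Hqx : forall j, q * x (S j) = x j) by (intro; rewrite lattice_S; field; lra).
  induction J as [|J IH]; simpl sum_f_R0.
  - rewrite !qEHT_op_difference_form, coefA_lattice_0, <- !lattice_S by auto. ring.
  - rewrite IH, !(qEHT_op_difference_form _ (x (S J))), !Hqx, <- !lattice_S by auto.
    rewrite <- (weight_pearson J). ring.
Qed.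

Lemma green_boundary_lim c N d M :
  is_lim_seq (fun J => w J * coefB (x J) *
     (poly_eval c N (x (S J)) * poly_eval d M (x J)
      - poly_eval d M (x (S J)) * poly_eval c N (x J))) 0.
Proof.
  set (K := q ^ 2 * s0 / (1 - q) ^ 2).
  apply (is_lim_seq_ext (fun J => K * (w J / x J ^ 2 *
     (poly_eval c N (x (S J)) * poly_eval d M (x J)
      - poly_eval d M (x (S J)) * poly_eval c N (x J))))).
  - intro J. pose proof (lattice_ge q b2 J Hq ltac:(lra)).
    unfold K, coefB. field. split; lra.
  - replace (Finite 0) with (Rbar_mult K 0) by (simpl; f_equal; ring).
    apply is_lim_seq_scal_l, weight_boundary_lim; assumption.
Qed.

Lemma weight_orthogonal c N d M mu nu : mu <> nu ->
  (forall z, L (poly_eval c N) z = mu * poly_eval c N z) ->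
  (forall z, L (poly_eval d M) z = nu * poly_eval d M z) ->
  is_series (fun j => w j * (poly_eval c N (x j) * poly_eval d M (x j))) 0.
Proof.
  intros Hmunu Hc Hd.
  change (is_lim_seq (sum_n (fun j => w j * (poly_eval c N (x j) * poly_eval d M (x j)))) 0).
  replace (Finite 0) with (Rbar_mult (/ (mu - nu)) 0) by (simpl; f_equal; ring).
  eapply is_lim_seq_ext;
    [|exact (is_lim_seq_scal_l _ (/ (mu - nu)) _ (green_boundary_lim c N d M))].
  intro J. simpl. rewrite sum_n_Reals, <- green_identity, scal_sum.
  apply sum_eq. intros j _. rewrite Hc, Hd. field. lra.
Qed.

End Green.

Theorem theorem5p8 (q s0 t0 t1 a2 b2 alpha : R) :
  0 < q < 1 ->
  s0 <> 0 ->
  t1 <> 0 ->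
  (forall x : R, q * (s0 + (1 - / q) * x * (t1 * x + t0))
                 = (q - 1) * t1 * (x - a2) * (x - b2)) ->
  0 < a2 -> a2 <= b2 ->
  t1 / s0 < 0 ->
  exp (alpha * ln q) = / q * ((q - 1) * t1) / s0 ->
  exists (c : nat -> nat -> R) (d : nat -> R),
    (forall n : nat, c n n <> 0) /\
    (forall n : nat,
       solves_qEHT q (fun _ => s0) (fun x => t1 * x + t0)
         (lambda_n q n t1 0) (poly_eval (c n) n)) /\
    (forall n : nat, d n <> 0) /\
    (forall m n : nat,
       is_series
         (jackson_term q b2
            (fun x => poly_eval (c n) n x * poly_eval (c m) m x * rho q alpha a2 b2 x))
         (if Nat.eqb m n then d n else 0)).
Proof.
  (* The sign of [t1 / s0] is forced by [q^alpha > 0]. *)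
  intros Hq Hs0 Ht1 Hsigma2 Ha2 Hab _ Hq_alpha.
  assert (Halpha : exp (alpha * ln q) = / (a2 * b2)).
  { specialize (Hsigma2 0). rewrite Rmult_0_r, Rmult_0_l, Rplus_0_r in Hsigma2.
    rewrite Hq_alpha. field_simplify_eq; [nra | repeat split; lra]. }
  set (P n := poly_eval (eig_coef q s0 t0 t1 n) n).
  set (x := lattice q b2). set (w := weight q alpha a2 b2).
  assert (Hterm : forall m n, jackson_term q b2 (fun z => P n z * P m z * rho q alpha a2 b2 z)
                              = fun j => w j * (P n (x j) * P m (x j))).
  { intros m n. apply functional_extensionality; intro j. apply jackson_term_mul_rho. }
  exists (eig_coef q s0 t0 t1), (fun n => Series (fun j => w j * (P n (x j) * P n (x j)))).
  split; [|split; [|split]].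
  - intro n. rewrite eig_coef_top. lra.
  - intro n. now apply eig_poly_solves_qEHT.
  - intro n. apply Rgt_not_eq, weight_norm_pos; auto. rewrite eig_coef_top. lra.
  - intros m n. fold (P n) (P m). rewrite Hterm.
    destruct (Nat.eqb_spec m n) as [->|Hmn].
    + apply Series_correct, ex_series_weight_poly_mul; assumption.
    + apply (weight_orthogonal q s0 t0 t1 alpha a2 b2 Hq Ha2 Hab Hsigma2 Halpha
               (eig_coef q s0 t0 t1 n) n (eig_coef q s0 t0 t1 m) m
               (qint q n * t1) (qint q m * t1)).
      * intro E. apply Rmult_eq_reg_r in E; [|exact Ht1].
        destruct (Nat.lt_total n m) as [Hlt|[Heq|Hlt]]; [| lia |];
          pose proof (qint_lt q _ _ ltac:(lra) Hlt); lra.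
      * intro z. apply eig_poly_eigen; assumption.
      * intro z. apply eig_poly_eigen; assumption.
Qed.
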